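(* Fix $\eta\in[0,1]$. The following hold. (1) Baseline policy: for any policy $\mu$, the rules $(\bar Q^\mu,\mu,\eta)$ and $(\bar Q^\mu,\mu^+,\eta)$ are admissible, where $\bar Q^\mu$ is restricted to $\mathcal S_{\mathrm{safe}}\times\mathcal A$ and $\mu^+$ is a greedy policy with $\mu^+(\cdot|s)$ supported on $\arg\min_a\bar Q^\mu(s,a)$. (2) Composite intervention: if $\mathcal G_k=(\bar Q_k,\mu_k,\eta)$ is $\sigma_k$-admissible for $k=1,\dots,K$, define $\bar Q_{\min}(s,a)=\min_k\bar Q_k(s,a)$, let $\mu_{\min}$ be greedy w.r.t. $\bar Q_{\min}$ (supported on $\arg\min_a\bar Q_{\min}(s,a)$) and $\sigma_{\max}=\max_k\sigma_k$; then $(\bar Q_{\min},\mu_{\min},\eta)$ is $\sigma_{\max}$-admissible. (3) Value iteration: let $(\bar{\mathcal T}Q)(s,a)=c(s,a)+\gamma\mathbb E_{s'\sim P(\cdot|s,a)}[\min_{a'}Q(s',a')]$. If $(\bar Q,\mu,\eta)$ is $\sigma$-admissible, then for every $k\ge0$, $(\bar{\mathcal T}^k\bar Q,\mu^k,\eta)$ is $\gamma^k\sigma$-admissible, where $\bar{\mathcal T}$ is applied to the extension of $\bar Q$ to $\mathcal S\times\mathcal A$, the result is restricted to $\mathcal S_{\mathrm{safe}}\times\mathcal A$, and $\mu^k$ is greedy w.r.t. $\bar{\mathcal T}^k\bar Q$. (4) Optimal intervention: if $\bar\pi^*$ is an optimal (cost-minimizing) policy for $\bar{\mathcal M}$ with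 state-action value $\bar Q^*$, then $(\bar Q^*,\bar\pi^*,\eta)$ is admissible. (5) Approximation: if $(\bar Q,\mu,\eta)$ is $\sigma$-admissible and $\hat Q:\mathcal S_{\mathrm{safe}}\times\mathcal A\to[0,\gamma]$ satisfies $\sup_{s\in\mathcal S_{\mathrm{safe}},a\in\mathcal A}|\hat Q(s,a)-\bar Q(s,a)|\le\delta$, then $(\hat Q,\mu,\eta)$ is $(\sigma+(1+\gamma)\delta)$-admissible.
   Context: $\mathcal M=(\mathcal S,\mathcal A,P,r,\gamma)$ is a discounted MDP with discrete state space, discrete action space (all minima over actions are assumed attained), discount $\gamma\in[0,1)$. $\mathcal S$ contains two distinguished states $s_\triangleright,s_\circ$; $\mathcal S_{\mathrm{unsafe}}=\{s_\triangleright,s_\circ\}$, $\mathcal S_{\mathrm{safe}}=\mathcal S\setminus\mathcal S_{\mathrm{unsafe}}$; from $s_\triangleright$ every action leads to $s_\circ$ w.p. 1 and $s_\circ$ is absorbing. Cost $c(s,a)=\mathbb 1\{s=s_\triangleright\}$ and $\bar{\mathcal M}=(\mathcal S,\mathcal A,P,c,\gamma)$. For a stationary policy $\mu$, $\bar Q^\mu(s,a)=\mathbb E[\sum_{t\ge0}\gamma^tc(s_t,a_t)\mid s_0=s,a_0=a]$ along trajectories of $\mu$; $g(s,\mu)=\mathbb E_{a\sim\mu(\cdot|s)}g(s,a)$. Intervention rule: a triple $\mathcal G=(\bar Q,\mu,\eta)$ with backup policy $\mu$, $\eta\in[0,1]$, and $\bar Q:\mathcal S_{\mathrm{safe}}\times\mathcal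 A\to[0,1]$, extended to $\mathcal S\times\mathcal A$ by $\bar Q(s_\triangleright,a)=1$, $\bar Q(s_\circ,a)=0$. It is $\sigma$-admissible ($\sigma\ge0$) if for all $s\in\mathcal S_{\mathrm{safe}},a\in\mathcal A$: $\bar Q(s,a)\in[0,\gamma]$ and $\bar Q(s,a)+\sigma\ge c(s,a)+\gamma\mathbb E_{s'\sim P(\cdot|s,a)}[\bar Q(s',\mu)]$; admissible means $0$-admissible. *)

From HB Require Import structures.
From mathcomp Require Import all_boot all_order all_algebra.
From mathcomp Require Import all_classical all_reals.
From mathcomp Require Import ereal topology normedtype sequences esum.
Set Implicit Arguments. Unset Strict Implicit. Unset Printing Implicit Defensive.
Import Order.TTheory GRing.Theory Num.Theory.
Local Open Scope ring_scope.
Local Open Scope classical_set_scope.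
Local Open Scope ereal_scope.

(* A discounted MDP with countable ("discrete") state and action spaces.
   Distributions over a countable type are nonnegative functions whose
   (unordered, extended-real) sum [esum] is 1. *)
Record mdp (R : realType) (S A : countType) := MDP {
  P : S -> A -> S -> R;          (* P s a s' = P(s' | s, a) *)
  rew : S -> A -> R;             (* reward r (unused by the cost MDP) *)
  gamma : R;
  s_tri : S;
  s_circ : S;
  P_ge0 : forall s a s', (0 <= P s a s')%R;
  P_sum1 : forall s a, \esum_(s' in [set: S]) (P s a s')%:E = 1;
  gamma_ge0 : (0 <= gamma)%R;
  gamma_lt1 : (gamma < 1)%R;
  tri_neq_circ : s_tri != s_circ;
  P_tri : forall a, P s_tri a s_circ = 1%R;
  P_circ : forall a, P s_circ a s_circ = 1%R
}.

Section defs.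
Variables (R : realType) (S A : countType) (M : mdp R S A).

Definition safe (s : S) : bool := (s != s_tri M) && (s != s_circ M).

Definition cost (s : S) (a : A) : R := if s == s_tri M then 1%R else 0%R.

(* stationary (stochastic) policy: mu s a = mu(a | s) *)
Definition is_policy (mu : S -> A -> R) : Prop :=
  (forall s a, (0 <= mu s a)%R) /\
  (forall s, \esum_(a in [set: A]) (mu s a)%:E = 1).

Definition EP (s : S) (a : A) (f : S -> \bar R) : \bar R :=
  \esum_(s' in [set: S]) (P M s a s')%:E * f s'.

(* g(s, mu) = E_{a ~ mu(.|s)} g(s,a) *)
Definition Epol (g : S -> A -> \bar R) (mu : S -> A -> R) (s : S) : \bar R :=
  \esum_(a in [set: A]) (mu s a)%:E * g s a.

(* distribution of (s_t, a_t) along trajectories of mu from s_0 = s, a_0 = a *)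
Fixpoint occ (mu : S -> A -> R) (s : S) (a : A) (t : nat) : S -> A -> \bar R :=
  match t with
  | O => fun s' a' => if (s' == s) && (a' == a) then 1 else 0
  | t'.+1 => fun s'' a'' =>
      (\esum_(p in [set: (S * A)%type])
          occ mu s a t' p.1 p.2 * (P M p.1 p.2 s'')%:E) * (mu s'' a'')%:E
  end.

(* Qbar^mu(s,a) = E[ sum_t gamma^t c(s_t,a_t) | s_0 = s, a_0 = a ]
               = sum_t gamma^t E[c(s_t,a_t)] *)
Definition Qpi (mu : S -> A -> R) (s : S) (a : A) : \bar R :=
  \sum_(t <oo) ((gamma M) ^+ t)%:E *
     \esum_(p in [set: (S * A)%type]) occ mu s a t p.1 p.2 * (cost p.1 p.2)%:E.

(* extension of Q : S_safe x A -> _ to S x A *)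
Definition ext (Q : S -> A -> \bar R) (s : S) (a : A) : \bar R :=
  if s == s_tri M then 1 else if s == s_circ M then 0 else Q s a.

(* min over actions (assumed attained; written as an infimum) *)
Definition minA (g : A -> \bar R) : \bar R := ereal_inf (range g).

Definition greedy (Q : S -> A -> \bar R) (mu : S -> A -> R) : Prop :=
  forall s a, mu s a != 0%R -> ext Q s a = minA (ext Q s).

Definition admissible (sigma : R) (Q : S -> A -> \bar R) (mu : S -> A -> R)
    (eta : R) : Prop :=
  [/\ (0 <= eta <= 1)%R, is_policy mu &
   forall s a, safe s ->
     0 <= Q s a <= (gamma M)%:E /\
     (cost s a)%:E + (gamma M)%:E * EP s a (Epol (ext Q) mu) <= Q s a + sigma%:E].

Definition Tbar (Q : S -> A -> \bar R) (s : S) (a : A) : \bar R :=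
  (cost s a)%:E + (gamma M)%:E * EP s a (fun s' => minA (Q s')).

Definition Titer (k : nat) (Q : S -> A -> \bar R) : S -> A -> \bar R :=
  iter k (fun Q' => Tbar (ext Q')) Q.

Definition optimal (pis : S -> A -> R) : Prop :=
  is_policy pis /\
  forall pi, is_policy pi -> forall s a, Qpi pis s a <= Qpi pi s a.

Definition Qmin (K : nat) (Qk : 'I_K -> S -> A -> \bar R) (s : S) (a : A) :=
  \big[mine/+oo]_(k < K) Qk k s a.
Definition sigmax (K : nat) (sig : 'I_K -> R) : R :=
  (\big[Num.max/0%R]_(k < K) sig k)%R.

End defs.

From Pilot Require Import Defs.
From HB Require Import structures.
From mathcomp Require Import all_boot all_order all_algebra.
From mathcomp Require Import all_classical all_reals.
From mathcomp Require Import ereal topology normedtype sequences esum.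
From mathcomp Require Import lra.
Import Order.TTheory GRing.Theory Num.Theory.
Local Open Scope ring_scope.
Local Open Scope classical_set_scope.
Local Open Scope ereal_scope.

(* Write [backup Q mu s a = c(s,a) + gamma E_{s'}[Q(s', mu)]] for the
   quantity that admissibility compares with [Q s a], and [Tbar] for the
   Bellman optimality operator; both are one-step look-aheads
   [c(s,a) + gamma E_{s'}[f s']] and inherit from the expectation its
   monotonicity and the rule "shifting f by c shifts the look-ahead by
   gamma * c".  Three facts then drive every item:
   - a greedy backup policy turns [backup Q] into [Tbar (ext Q)], and any
     policy gives [Tbar (ext Q) <= backup Q] ([greedy_admissible]);
   - [Tbar] and [backup] are gamma-contractions for one-sided shifts;
   - the policy value [Qpi] satisfies the Bellman evaluation equation,
     lies in [0, gamma] on safe states and takes the values 1 and 0 on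
     [s_tri] and [s_circ], so it is a fixed point of its own backup. *)

Section unordered_sums.
Context {R : realType}.

Lemma esumZl (T : choiceType) (I : set T) (r : R) (a : T -> \bar R) :
  (0 <= r)%R -> (forall i, I i -> 0 <= a i) ->
  \esum_(i in I) (r%:E * a i) = r%:E * \esum_(i in I) a i.
Proof.
move=> r0 a0; rewrite /esum -ereal_supZl//; last first.
  by apply/set0P; exists 0; exists set0; [exact: fsets_set0|rewrite fsbig_set0].
have sumZ X : finite_set X -> X `<=` I ->
    \sum_(i \in X) (r%:E * a i) = r%:E * \sum_(i \in X) a i.
  move=> finX XI; rewrite !fsbig_finite// big_seq_cond [in RHS]big_seq_cond.
  by rewrite ge0_sume_distrr// => i; rewrite andbT in_fset_set// inE => /XI /a0.
congr ereal_sup; apply/seteqP; split.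
  by move=> _ /= [X [finX XI] <-]; exists (\sum_(i \in X) a i); [exists X|rewrite sumZ].
by move=> _ /= [_ [X [finX XI] <-] <-]; exists X => //; rewrite sumZ.
Qed.

Lemma esumZr (T : choiceType) (I : set T) (r : R) (a : T -> \bar R) :
  (0 <= r)%R -> (forall i, I i -> 0 <= a i) ->
  \esum_(i in I) (a i * r%:E) = (\esum_(i in I) a i) * r%:E.
Proof.
by move=> r0 a0; rewrite muleC -esumZl//; apply: eq_esum => i _; rewrite muleC.
Qed.

Lemma esum_point (T : choiceType) (f : T -> \bar R) (i0 : T) :
  (forall i, i != i0 -> f i = 0) -> 0 <= f i0 ->
  \esum_(i in [set: T]) f i = f i0.
Proof.
move=> f0 fi0; have fge0 i : [set: T] i -> 0 <= f i.
  by move=> _; have [->//|/f0->] := eqVneq i i0.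
rewrite (esumID [set i0]) // setTI esum_set1// esum1 ?adde0// => i [_ /=].
by move=> /eqP; apply: f0.
Qed.

Lemma esum_swap (T1 T2 : choiceType) (a : T1 -> T2 -> \bar R) :
  (forall i j, 0 <= a i j) ->
  \esum_(i in [set: T1]) \esum_(j in [set: T2]) a i j =
  \esum_(j in [set: T2]) \esum_(i in [set: T1]) a i j.
Proof.
move=> a0; rewrite !esum_esum//.
rewrite (reindex_esum ([set: T2] `*`` (fun=> [set: T1])) _ (fun x => (x.2, x.1)))//.
split=> //; first by move=> [i1 i2] [j1 j2] _ _ [] -> ->.
by move=> [i1 i2] _; exists (i2, i1).
Qed.

Lemma esum_kernel_assoc (T1 T2 : choiceType) (k : T1 -> R) (F : T1 -> T2 -> \bar R)
    (h : T2 -> R) :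
  (forall q, (0 <= k q)%R) -> (forall q p, 0 <= F q p) -> (forall p, (0 <= h p)%R) ->
  \esum_(p in [set: T2]) ((\esum_(q in [set: T1]) (k q)%:E * F q p) * (h p)%:E) =
  \esum_(q in [set: T1]) (k q)%:E * \esum_(p in [set: T2]) (F q p * (h p)%:E).
Proof.
move=> k0 F0 h0; transitivity (\esum_(p in [set: T2]) \esum_(q in [set: T1])
    ((k q)%:E * (F q p * (h p)%:E))).
  apply: eq_esum => p _; rewrite -esumZr//; last first.
    by move=> q _; rewrite mule_ge0// lee_fin.
  by apply: eq_esum => q _; rewrite muleA.
rewrite esum_swap; last by move=> p q; rewrite !mule_ge0// lee_fin.
by apply: eq_esum => q _; rewrite esumZl// => p _; rewrite mule_ge0// lee_fin.
Qed.

End unordered_sums.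

(* Expectation of an extended-real function under weights [w]; [EP] and
   [Epol] of the MDP are instances of it. *)
Definition Ew {R : realType} {T : choiceType} (w : T -> R) (f : T -> \bar R) :=
  \esum_(i in [set: T]) (w i)%:E * f i.

Section expectation.
Context {R : realType} {T : choiceType} {w : T -> R}.
Hypotheses (w_ge0 : forall i, (0 <= w i)%R)
  (w_sum1 : \esum_(i in [set: T]) (w i)%:E = 1).

Lemma Ew_ge0 f : (forall i, 0 <= f i) -> 0 <= Ew w f.
Proof. by move=> f0; apply: esum_ge0 => i _; rewrite mule_ge0// lee_fin. Qed.

Lemma Ew_le f g : (forall i, f i <= g i) -> Ew w f <= Ew w g.
Proof. by move=> fg; apply: le_esum => i _; rewrite lee_wpmul2l// lee_fin. Qed.

Lemma Ew_cst (c : R) : (0 <= c)%R -> Ew w (fun=> c%:E) = c%:E.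
Proof.
move=> c0; rewrite /Ew; under eq_esum do rewrite muleC.
by rewrite esumZl ?w_sum1 ?mule1// => i _; rewrite lee_fin.
Qed.

Lemma Ew_shift f g (c : R) : (forall i, 0 <= g i) -> (0 <= c)%R ->
  (forall i, f i <= g i + c%:E) -> Ew w f <= Ew w g + c%:E.
Proof.
move=> g0 c0 fg; have EwDc : Ew w (fun i => g i + c%:E) = Ew w g + c%:E.
  rewrite /Ew; under eq_esum do rewrite ge0_muleDr ?lee_fin//.
  by rewrite esumD; [congr (_ + _); exact: Ew_cst|..];
    move=> i _; rewrite mule_ge0// lee_fin.
by rewrite -EwDc; apply: Ew_le.
Qed.

Lemma Ew_01 f : (forall i, 0 <= f i <= 1) -> 0 <= Ew w f <= 1.
Proof.
move=> f01; rewrite Ew_ge0 /=; last by move=> i; case/andP: (f01 i).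
by rewrite -(@Ew_cst 1%R)//; apply: Ew_le => i; case/andP: (f01 i).
Qed.

End expectation.

Section action_minimum.
Context {R : realType} {A : countType}.
Implicit Types (g h : A -> \bar R).

Lemma minA_le g a : Defs.minA g <= g a.
Proof. by apply: ereal_inf_lbound; exists a. Qed.

Lemma minA_ge0 g : (forall a, 0 <= g a) -> 0 <= Defs.minA g.
Proof. by move=> g0; apply: le_ereal_inf_tmp => _ [a _ <-]. Qed.

Lemma minA_shift g h (c : R) : (forall a, g a <= h a + c%:E) ->
  Defs.minA g <= Defs.minA h + c%:E.
Proof.
move=> gh; rewrite -leeBlDr//; apply: le_ereal_inf_tmp => _ [a _ <-].
by rewrite leeBlDr// (le_trans (minA_le g a)).
Qed.

(* A probability distribution on actions forces the action type to be
   inhabited; this is what makes minima over actions finite. *)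
Lemma distribution_inhabited {w : A -> R} :
  \esum_(a in [set: A]) (w a)%:E = 1 -> inhabited A.
Proof.
move=> w1; apply: contrapT => nA; suff : \esum_(a in [set: A]) (w a)%:E = 0.
  by rewrite w1 => /eqP; rewrite onee_eq0.
by apply: esum1 => a _; exfalso; apply: nA.
Qed.

Lemma minA_01 g : inhabited A -> (forall a, 0 <= g a <= 1) -> 0 <= Defs.minA g <= 1.
Proof.
move=> [a0] g01; have /andP[_ ga0] := g01 a0.
rewrite minA_ge0 ?(le_trans (minA_le g a0))// => a.
by case/andP: (g01 a).
Qed.

Context {w : A -> R}.
Hypotheses (w_ge0 : forall a, (0 <= w a)%R)
  (w_sum1 : \esum_(a in [set: A]) (w a)%:E = 1).

Let minA_fin {g : A -> \bar R} : (forall a, 0 <= g a <= 1) -> Defs.minA g \is a fin_num.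
Proof.
move=> g01; have /andP[m0 m1] := minA_01 g (distribution_inhabited w_sum1) g01.
by rewrite ge0_fin_numE// (le_lt_trans m1)// ltry.
Qed.

Lemma minA_le_Ew g : (forall a, 0 <= g a <= 1) -> Defs.minA g <= Ew w g.
Proof.
move=> g01; have mfin := minA_fin g01.
rewrite -(fineK mfin) -(Ew_cst w_ge0 w_sum1) ?fine_ge0 ?minA_ge0//; last first.
  by move=> a; case/andP: (g01 a).
by apply: (Ew_le w_ge0) => a; rewrite fineK// minA_le.
Qed.

Lemma Ew_greedy g : (forall a, 0 <= g a <= 1) ->
  (forall a, w a != 0%R -> g a = Defs.minA g) -> Ew w g = Defs.minA g.
Proof.
move=> g01 gmin; have mfin := minA_fin g01.
rewrite -[RHS](fineK mfin) -(Ew_cst w_ge0 w_sum1) ?fine_ge0 ?minA_ge0//; last first.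
  by move=> a; case/andP: (g01 a).
apply: eq_esum => a _; have [->|/gmin ->] := eqVneq (w a) 0%R; first by rewrite !mul0e.
by rewrite fineK.
Qed.

End action_minimum.

Section mdp_basics.
Context {R : realType} {S A : countType} (M : mdp R S A).

Lemma gamma_le1 : (gamma M <= 1)%R.
Proof. exact/ltW/gamma_lt1. Qed.

Lemma P_point s a s0 s' : P M s a s0 = 1%R -> s' != s0 -> P M s a s' = 0%R.
Proof.
move=> P1 ns; have Ps0s' : (P M s a s0)%:E + (P M s a s')%:E <= 1.
  rewrite -(P_sum1 M s a) (esumID [set s0]); last by move=> i _; rewrite lee_fin P_ge0.
  rewrite setTI esum_set1 ?lee_fin ?P_ge0// leeD2l//; apply: esum_ge.
  exists [set s']; last by rewrite fsbig_set1.
  by split; [exact: finite_set1|move=> i /= ->; split => //; apply/eqP].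
move: Ps0s'; rewrite P1 -EFinD lee_fin => Ps'.
by apply/eqP; rewrite eq_le P_ge0 andbT -(lerD2l 1%R) addr0.
Qed.

Lemma P_tri0 a s' : s' != s_circ M -> P M (s_tri M) a s' = 0%R.
Proof. exact/P_point/P_tri. Qed.

Lemma P_circ0 a s' : s' != s_circ M -> P M (s_circ M) a s' = 0%R.
Proof. exact/P_point/P_circ. Qed.

Lemma cost_ge0 s a : (0 <= cost M s a)%R.
Proof. by rewrite /cost; case: ifP. Qed.

Lemma cost_tri a : cost M (s_tri M) a = 1%R.
Proof. by rewrite /cost eqxx. Qed.

Lemma cost_ntri s a : s != s_tri M -> cost M s a = 0%R.
Proof. by rewrite /cost => /negPf ->. Qed.

Lemma safe_ntri s : safe M s -> s != s_tri M.
Proof. by case/andP. Qed.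

Lemma policy_inhabited {mu : S -> A -> R} : is_policy mu -> inhabited A.
Proof. by move=> [_ mu1]; exact: distribution_inhabited (mu1 (s_tri M)). Qed.

Definition Qbounded (Q : S -> A -> \bar R) : Prop :=
  forall s a, safe M s -> 0 <= Q s a <= (gamma M)%:E.

Lemma Qbounded_fin {Q} : Qbounded Q -> forall s a, safe M s -> Q s a \is a fin_num.
Proof.
move=> bQ s a ss; have /andP[Q0 Qg] := bQ s a ss.
by rewrite ge0_fin_numE// (le_lt_trans Qg)// ltry.
Qed.

Lemma ext_01 {Q : S -> A -> \bar R} : Qbounded Q -> forall s a, 0 <= ext M Q s a <= 1.
Proof.
move=> bQ s a; rewrite /ext; case: ifPn => [_|nt]; first by rewrite lee01 lexx.
case: ifPn => [_|nc]; first by rewrite lexx lee01.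
have /andP[-> Qg] := bQ s a (introT andP (conj nt nc)).
by rewrite (le_trans Qg)// lee_fin gamma_le1.
Qed.

(* A shift on safe states extends to the extended functions, whose values
   on the two unsafe states are fixed. *)
Lemma ext_shift Q Q' (c : R) : (0 <= c)%R ->
  (forall s a, safe M s -> Q' s a <= Q s a + c%:E) ->
  forall s a, ext M Q' s a <= ext M Q s a + c%:E.
Proof.
move=> c0 QQ' s a; rewrite /ext; case: ifPn => nt; first by rewrite leeDl// lee_fin.
case: ifPn => nc; first by rewrite add0e lee_fin.
exact: QQ' (introT andP (conj nt nc)).
Qed.

Definition lookahead (s : S) (a : A) (f : S -> \bar R) : \bar R :=
  (cost M s a)%:E + (gamma M)%:E * EP M s a f.

Definition backup (Q : S -> A -> \bar R) (mu : S -> A -> R) (s : S) (a : A) :=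
  lookahead s a (Epol (ext M Q) mu).

Lemma admissibleE sigma Q mu eta : admissible M sigma Q mu eta <->
  [/\ (0 <= eta <= 1)%R, is_policy mu, Qbounded Q &
      forall s a, safe M s -> backup Q mu s a <= Q s a + sigma%:E].
Proof.
split=> [[heta hmu adm]|[heta hmu bQ hQ]].
  by split=> // s a ss; have [] := adm s a ss.
by split=> // s a ss; split; [exact: bQ|exact: hQ].
Qed.

Lemma lookahead_mono s a f g : (forall s', f s' <= g s') ->
  lookahead s a f <= lookahead s a g.
Proof.
move=> fg; rewrite leeD2l// lee_wpmul2l ?lee_fin ?gamma_ge0//.
exact: (Ew_le (P_ge0 M s a)).
Qed.

Lemma lookahead_shift s a f g (c : R) : (forall s', 0 <= g s') -> (0 <= c)%R ->
  (forall s', f s' <= g s' + c%:E) ->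
  lookahead s a f <= lookahead s a g + (gamma M * c)%:E.
Proof.
move=> g0 c0 fg; rewrite /lookahead -addeA leeD2l// EFinM -ge0_muleDr ?lee_fin//.
  rewrite lee_wpmul2l ?lee_fin ?gamma_ge0//.
  exact: (Ew_shift (P_ge0 M s a) (P_sum1 M s a)).
exact: (Ew_ge0 (P_ge0 M s a)).
Qed.

Lemma lookahead_bounded s a f : safe M s -> (forall s', 0 <= f s' <= 1) ->
  0 <= lookahead s a f <= (gamma M)%:E.
Proof.
move=> /safe_ntri ns f01; rewrite /lookahead cost_ntri// add0e.
have /andP[Ef0 Ef1] := Ew_01 (P_ge0 M s a) (P_sum1 M s a) f f01.
rewrite mule_ge0 ?lee_fin ?gamma_ge0//=.
by rewrite -[X in _ <= X]mule1 lee_wpmul2l ?lee_fin ?gamma_ge0.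
Qed.

End mdp_basics.

Section greedy_backups.
Context {R : realType} {S A : countType} {M : mdp R S A}.
Implicit Types (Q : S -> A -> \bar R) (mu : S -> A -> R).

Lemma Epol_01 Q mu s : is_policy mu -> Qbounded M Q -> 0 <= Epol (ext M Q) mu s <= 1.
Proof. by move=> [mu0 mu1] bQ; exact: (Ew_01 (mu0 s) (mu1 s) _ (ext_01 M bQ s)). Qed.

Lemma Tbar_le_backup {Q mu} s a : is_policy mu -> Qbounded M Q ->
  Tbar M (ext M Q) s a <= backup M Q mu s a.
Proof.
move=> [mu0 mu1] bQ; apply: lookahead_mono => s'.
exact: (minA_le_Ew (mu0 s') (mu1 s') _ (ext_01 M bQ s')).
Qed.

Lemma backup_greedy {Q mu} s a : is_policy mu -> Qbounded M Q -> greedy M Q mu ->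
  backup M Q mu s a = Tbar M (ext M Q) s a.
Proof.
move=> [mu0 mu1] bQ gr; rewrite /backup /lookahead /Tbar; congr (_ + _ * _).
apply: eq_esum => s' _; congr (_ * _).
by apply: (Ew_greedy (mu0 s') (mu1 s') _ (ext_01 M bQ s')) => a' /gr.
Qed.

Lemma greedy_admissible sigma Q mu eta : (0 <= eta <= 1)%R -> is_policy mu ->
  Qbounded M Q -> greedy M Q mu ->
  (forall s a, safe M s -> Tbar M (ext M Q) s a <= Q s a + sigma%:E) ->
  admissible M sigma Q mu eta.
Proof.
move=> heta hmu bQ gr TQ; apply/admissibleE; split=> // s a ss.
by rewrite backup_greedy//; exact: TQ.
Qed.

Lemma Tbar_bounded {Q} : inhabited A -> Qbounded M Q -> Qbounded M (Tbar M (ext M Q)).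
Proof.
move=> inhA bQ s a ss; apply: lookahead_bounded => // s'.
exact: minA_01 _ inhA (ext_01 M bQ s').
Qed.

Lemma Titer_succ k Q : Titer M k.+1 Q = Tbar M (ext M (Titer M k Q)).
Proof. by []. Qed.

Lemma Tbar_shift {Q Q'} {c : R} : Qbounded M Q -> (0 <= c)%R ->
  (forall s a, safe M s -> Q' s a <= Q s a + c%:E) ->
  forall s a, Tbar M (ext M Q') s a <= Tbar M (ext M Q) s a + (gamma M * c)%:E.
Proof.
move=> bQ c0 QQ' s a; apply: lookahead_shift => // s'.
  by apply: minA_ge0 => a'; have /andP[] := ext_01 M bQ s' a'.
exact/minA_shift/ext_shift.
Qed.

Lemma backup_shift {Q Q' mu} {c : R} : is_policy mu -> Qbounded M Q -> (0 <= c)%R ->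
  (forall s a, safe M s -> Q' s a <= Q s a + c%:E) ->
  forall s a, backup M Q' mu s a <= backup M Q mu s a + (gamma M * c)%:E.
Proof.
move=> hmu bQ c0 QQ' s a; apply: lookahead_shift => // s'.
  by have /andP[] := Epol_01 Q mu s' hmu bQ.
have [mu0 mu1] := hmu; apply: (Ew_shift (mu0 s') (mu1 s')) => // a'.
  by have /andP[] := ext_01 M bQ s' a'.
exact: ext_shift.
Qed.

End greedy_backups.

Section occupancy.
Context {R : realType} {S A : countType} (M : mdp R S A).
Variable mu : S -> A -> R.
Hypothesis hmu : is_policy mu.

Let mu_ge0 s a : (0 <= mu s a)%R. Proof. by case: hmu. Qed.

(* One-step kernel on state-action pairs: draw s' ~ P(.|s,a), then a' ~ mu(.|s'). *)
Definition pairK (s : S) (a : A) (q : S * A) : R := P M s a q.1 * mu q.1 q.2.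

Lemma pairK_ge0 s a q : (0 <= pairK s a q)%R.
Proof. by rewrite mulr_ge0 ?P_ge0 ?mu_ge0. Qed.

Lemma EP_Epol g s a : (forall s' a', 0 <= g s' a') ->
  EP M s a (Epol g mu) = Ew (pairK s a) (fun q => g q.1 q.2).
Proof.
move=> g0; transitivity (\esum_(s' in [set: S]) \esum_(a' in [set: A])
    ((pairK s a (s', a'))%:E * g s' a')).
  apply: eq_esum => s' _; rewrite -esumZl ?P_ge0//; last first.
    by move=> a' _; rewrite mule_ge0// lee_fin.
  by apply: eq_esum => a' _; rewrite muleA EFinM.
rewrite esum_esum; last by move=> s' a' _ _; rewrite mule_ge0// lee_fin pairK_ge0.
by congr esum; apply/seteqP.
Qed.

Lemma pairK_sum1 s a : \esum_(q in [set: S * A]) (pairK s a q)%:E = 1.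
Proof.
have := EP_Epol (fun _ _ => 1) s a (fun _ _ => lee01).
rewrite /Ew; under [in RHS]eq_esum do rewrite mule1.
move=> <-; rewrite -[RHS](P_sum1 M s a); have [_ mu1] := hmu.
apply: eq_esum => s' _; rewrite /Epol.
by under eq_esum do rewrite mule1; rewrite mu1 mule1.
Qed.

Lemma pairK_unsafe s a (Y : S * A -> \bar R) : (s = s_tri M \/ s = s_circ M) ->
  (forall a', Y (s_circ M, a') = 0) -> Ew (pairK s a) Y = 0.
Proof.
move=> hs Y0; apply: esum1 => -[s' a'] _ /=.
have [->|ns'] := eqVneq s' (s_circ M); first by rewrite Y0 mule0.
by rewrite /pairK /=; case: hs => ->; rewrite ?P_tri0 ?P_circ0// mul0r mul0e.
Qed.

Lemma occ_ge0 s a t s' a' : 0 <= occ M mu s a t s' a'.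
Proof.
elim: t s' a' => [|t IH] s' a' /=; first by case: ifP.
rewrite mule_ge0 ?lee_fin//; apply: esum_ge0 => p _.
by rewrite mule_ge0// lee_fin P_ge0.
Qed.

Lemma occ_first s a t s' a' :
  occ M mu s a t.+1 s' a' = Ew (pairK s a) (fun q => occ M mu q.1 q.2 t s' a').
Proof.
elim: t s' a' => [|t IH] s' a'.
  rewrite /= (@esum_point _ _ _ (s, a)); last first.
  - by rewrite /= !eqxx mul1e lee_fin P_ge0.
  - by move=> [x y] /=; rewrite xpair_eqE => /negPf ->; rewrite mul0e.
  rewrite /= !eqxx mul1e /Ew (@esum_point _ _ _ (s', a')); last first.
  - by rewrite /= !eqxx mule1 lee_fin pairK_ge0.
  - move=> [x y] /= xy; case: ifP => [/andP[/eqP ex /eqP ey]|_]; last by rewrite mule0.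
    by move: xy; rewrite -ex -ey eqxx.
  by rewrite /= !eqxx mule1 /pairK /= EFinM.
transitivity ((\esum_(p in [set: S * A])
    Ew (pairK s a) (fun q => occ M mu q.1 q.2 t p.1 p.2) * (P M p.1 p.2 s')%:E) *
    (mu s' a')%:E).
  by congr (_ * _); apply: eq_esum => p _; rewrite -IH.
rewrite esum_kernel_assoc; last first.
- by move=> p; rewrite P_ge0.
- by move=> q p; exact: occ_ge0.
- by move=> q; exact: pairK_ge0.
rewrite /Ew -esumZr//; last first.
  move=> q _; rewrite mule_ge0// ?lee_fin ?pairK_ge0// esum_ge0// => p _.
  by rewrite mule_ge0 ?occ_ge0// lee_fin P_ge0.
by apply: eq_esum => q _; rewrite -muleA.
Qed.

Definition exp_cost (s : S) (a : A) (t : nat) : \bar R :=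
  \esum_(p in [set: S * A]) occ M mu s a t p.1 p.2 * (cost M p.1 p.2)%:E.

Lemma exp_cost_ge0 s a t : 0 <= exp_cost s a t.
Proof. by apply: esum_ge0 => p _; rewrite mule_ge0 ?occ_ge0// lee_fin cost_ge0. Qed.

Lemma exp_cost0 s a : exp_cost s a 0 = (cost M s a)%:E.
Proof.
rewrite /exp_cost (@esum_point _ _ _ (s, a)) /=; first by rewrite !eqxx mul1e.
  by move=> [x y] /=; rewrite xpair_eqE => /negPf ->; rewrite mul0e.
by rewrite !eqxx mul1e lee_fin cost_ge0.
Qed.

Lemma exp_cost_succ s a t :
  exp_cost s a t.+1 = Ew (pairK s a) (fun q => exp_cost q.1 q.2 t).
Proof.
rewrite /exp_cost; under eq_esum do rewrite occ_first.
by apply: esum_kernel_assoc => *; [exact: pairK_ge0|exact: occ_ge0|exact: cost_ge0].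
Qed.

Lemma exp_cost_circ a t : exp_cost (s_circ M) a t = 0.
Proof.
elim: t a => [|t IH] a; first by rewrite exp_cost0 cost_ntri// eq_sym tri_neq_circ.
by rewrite exp_cost_succ pairK_unsafe //; right.
Qed.

Definition disc_cost (s : S) (a : A) (t : nat) : \bar R :=
  ((gamma M) ^+ t)%:E * exp_cost s a t.

Lemma disc_cost_ge0 s a t : 0 <= disc_cost s a t.
Proof. by rewrite mule_ge0 ?lee_fin ?exprn_ge0 ?gamma_ge0// exp_cost_ge0. Qed.

Lemma disc_cost_succ s a t :
  disc_cost s a t.+1 = (gamma M)%:E * Ew (pairK s a) (fun q => disc_cost q.1 q.2 t).
Proof.
rewrite /disc_cost exprS EFinM -muleA exp_cost_succ; congr (_ * _).
rewrite /Ew -esumZl ?exprn_ge0 ?gamma_ge0//; last first.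
  by move=> q _; rewrite mule_ge0 ?lee_fin ?pairK_ge0// exp_cost_ge0.
by apply: eq_esum => q _; rewrite muleCA.
Qed.

End occupancy.

Section policy_value.
Context {R : realType} {S A : countType} (M : mdp R S A).
Variable mu : S -> A -> R.
Hypothesis hmu : is_policy mu.

Let pairK_Ew_01 s a (f : S * A -> \bar R) : (forall q, 0 <= f q <= 1) ->
  0 <= Ew (pairK M mu s a) f <= 1.
Proof. exact: Ew_01 (pairK_ge0 M mu hmu s a) (pairK_sum1 M mu hmu s a) f. Qed.

Lemma Qpi_disc s a : Qpi M mu s a = \sum_(t <oo) disc_cost M mu s a t.
Proof. by []. Qed.

Lemma Qpi_ge0 s a : 0 <= Qpi M mu s a.
Proof. by rewrite Qpi_disc nneseries_ge0// => t _ _; exact: disc_cost_ge0. Qed.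

Definition Vn (n : nat) (s : S) (a : A) : \bar R :=
  \sum_(0 <= t < n) disc_cost M mu s a t.

Lemma Vn_ge0 n s a : 0 <= Vn n s a.
Proof. by apply: sume_ge0 => t _; exact: disc_cost_ge0. Qed.

Lemma Vn_circ n a : Vn n (s_circ M) a = 0.
Proof. by rewrite /Vn big1// => t _; rewrite /disc_cost exp_cost_circ// mule0. Qed.

Lemma Vn_succ n s a : Vn n.+1 s a =
  (cost M s a)%:E + (gamma M)%:E * Ew (pairK M mu s a) (fun q => Vn n q.1 q.2).
Proof.
rewrite /Vn big_nat_recl// {1}/disc_cost expr0 mul1e exp_cost0; congr (_ + _).
under eq_bigr do rewrite disc_cost_succ//.
rewrite -ge0_sume_distrr; last first.
  by move=> t _; apply: (Ew_ge0 (pairK_ge0 M mu hmu s a)) => q; exact: disc_cost_ge0.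
congr (_ * _); rewrite /Ew -esum_sum; last first.
  by move=> q t _ _; rewrite mule_ge0 ?lee_fin ?pairK_ge0// disc_cost_ge0.
by apply: eq_esum => q _; rewrite ge0_sume_distrr// => t _; exact: disc_cost_ge0.
Qed.

(* At most one unit of cost is ever paid: [s_tri] is visited at most once. *)
Lemma Vn_le1 n s a : Vn n s a <= 1.
Proof.
elim: n s a => [|n IH] s a; first by rewrite /Vn big_geq.
rewrite Vn_succ; have [->|ns] := eqVneq s (s_tri M).
  by rewrite cost_tri pairK_unsafe ?mule0 ?adde0//; [left|move=> a'; exact: Vn_circ].
rewrite cost_ntri// add0e.
have /andP[_ EV1] := pairK_Ew_01 s a (fun q => Vn n q.1 q.2)
  (fun q => introT andP (conj (Vn_ge0 n q.1 q.2) (IH q.1 q.2))).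
apply: le_trans (lee_wpmul2l _ EV1) _; first by rewrite lee_fin gamma_ge0.
by rewrite mule1 lee_fin gamma_le1.
Qed.

Lemma Qpi_le1 s a : Qpi M mu s a <= 1.
Proof.
rewrite Qpi_disc; apply: lime_le; last by apply: nearW => n; exact: Vn_le1.
by apply: is_cvg_nneseries => t _ _; exact: disc_cost_ge0.
Qed.

Lemma Qpi_bellman s a : Qpi M mu s a =
  (cost M s a)%:E + (gamma M)%:E * Ew (pairK M mu s a) (fun q => Qpi M mu q.1 q.2).
Proof.
have dc0 t s' a' : 0 <= disc_cost M mu s' a' t by exact: disc_cost_ge0.
have Kdc0 t q : 0 <= (pairK M mu s a q)%:E * disc_cost M mu q.1 q.2 t.
  by rewrite mule_ge0 ?lee_fin ?pairK_ge0.
rewrite Qpi_disc nneseries_recl// {1}/disc_cost expr0 mul1e exp_cost0; congr (_ + _).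
rewrite -nneseries_addn//; under eq_eseriesr do rewrite addn1 disc_cost_succ//.
rewrite nneseriesZl; last by move=> t _; apply: esum_ge0 => q _.
congr (_ * _); rewrite nneseries_esumT; last by move=> t; apply: esum_ge0 => q _.
rewrite esum_swap//; apply: eq_esum => q _.
by rewrite -nneseries_esumT// nneseriesZl// => t _.
Qed.

Lemma Qpi_circ a : Qpi M mu (s_circ M) a = 0.
Proof.
by rewrite Qpi_disc eseries0// => t _ _; rewrite /disc_cost exp_cost_circ// mule0.
Qed.

Lemma Qpi_tri a : Qpi M mu (s_tri M) a = 1.
Proof.
rewrite Qpi_bellman cost_tri pairK_unsafe ?mule0 ?adde0//; first by left.
by move=> a'; exact: Qpi_circ.
Qed.

Lemma ext_Qpi : ext M (Qpi M mu) = Qpi M mu.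
Proof.
apply/funext => s; apply/funext => a; rewrite /ext.
by case: eqP => [->|_]; [rewrite Qpi_tri|case: eqP => [->|_]; rewrite ?Qpi_circ].
Qed.

Lemma Qpi_bounded : Qbounded M (Qpi M mu).
Proof.
move=> s a /safe_ntri ns; rewrite Qpi_ge0 Qpi_bellman cost_ntri// add0e /=.
have /andP[_ EQ1] := pairK_Ew_01 s a (fun q => Qpi M mu q.1 q.2)
  (fun q => introT andP (conj (Qpi_ge0 q.1 q.2) (Qpi_le1 q.1 q.2))).
by rewrite -[X in _ <= X]mule1 lee_wpmul2l ?lee_fin ?gamma_ge0.
Qed.

Lemma backup_Qpi s a : backup M (Qpi M mu) mu s a = Qpi M mu s a.
Proof.
rewrite /backup /lookahead ext_Qpi (EP_Epol M mu hmu); first by rewrite -Qpi_bellman.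
by move=> s' a'; exact: Qpi_ge0.
Qed.

End policy_value.

Lemma fin_dist_le {R : realType} {x y : \bar R} {d : R} :
  x \is a fin_num -> y \is a fin_num ->
  `|x - y| <= d%:E -> x <= y + d%:E /\ y <= x + d%:E.
Proof.
move: x y => [x| |] [y| |] // _ _; rewrite -EFinB -!EFinD /= !lee_fin.
by move=> /ler_normlP[]; split; lra.
Qed.

Section intervention_rules.
Context {R : realType} {S A : countType} (M : mdp R S A).
Context {eta : R} (heta : (0 <= eta <= 1)%R).

Lemma baseline_admissible mu : is_policy mu -> admissible M 0 (Qpi M mu) mu eta.
Proof.
move=> hmu; apply/admissibleE; split=> // [|s a _]; first exact: Qpi_bounded.
by rewrite backup_Qpi// adde0.
Qed.

Lemma greedy_baseline_admissible mu mup : is_policy mu -> is_policy mup ->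
  greedy M (Qpi M mu) mup -> admissible M 0 (Qpi M mu) mup eta.
Proof.
move=> hmu hmup gr; have bQ := Qpi_bounded M mu hmu.
apply: greedy_admissible => // s a _; rewrite adde0 -[leRHS](backup_Qpi M mu hmu).
exact: Tbar_le_backup.
Qed.

Lemma composite_admissible K (Qk : 'I_K -> S -> A -> \bar R)
    (muk : 'I_K -> S -> A -> R) (sig : 'I_K -> R) :
  (0 < K)%N -> (forall k, admissible M (sig k) (Qk k) (muk k) eta) ->
  forall mumin, is_policy mumin -> greedy M (Qmin Qk) mumin ->
  admissible M (sigmax sig) (Qmin Qk) mumin eta.
Proof.
move=> K0 adm mumin hmin gr.
have Qmin_attained s a : exists k, Qmin Qk s a = Qk k s a.
  exists [arg min_(i < Ordinal K0) Qk i s a]%O.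
  by rewrite /Qmin (bigmin_eq_arg _ (Ordinal K0))// => i _; rewrite leey.
have bQk k : Qbounded M (Qk k) by have /admissibleE[] := adm k.
have bQmin : Qbounded M (Qmin Qk).
  by move=> s a ss; have [k ->] := Qmin_attained s a; exact: bQk.
apply: greedy_admissible => // s a ss; have [k ->] := Qmin_attained s a.
have /admissibleE[_ hmuk _ backk] := adm k.
have TQmin : Tbar M (ext M (Qmin Qk)) s a <= Tbar M (ext M (Qk k)) s a.
  have := Tbar_shift (bQk k) (lexx 0%R) _ s a; rewrite mulr0 adde0; apply.
  by move=> s' a' _; rewrite adde0 /Qmin; exact: bigmin_le.
apply: le_trans TQmin (le_trans (Tbar_le_backup s a hmuk (bQk k)) _).
by apply: le_trans (backk s a ss) _; rewrite leeD2l// lee_fin le_bigmax.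
Qed.

Lemma value_iteration_admissible sigma Q mu : (0 <= sigma)%R ->
  admissible M sigma Q mu eta ->
  forall k muk, is_policy muk -> greedy M (Titer M k Q) muk ->
  admissible M (gamma M ^+ k * sigma) (Titer M k Q) muk eta.
Proof.
move=> sigma0 /admissibleE[_ hmu bQ backQ] k muk hmuk gr.
have bT j : Qbounded M (Titer M j Q).
  elim: j => [|j IH] //; rewrite Titer_succ.
  exact: Tbar_bounded (policy_inhabited M hmu) IH.
have T_decr j s a : safe M s ->
    Titer M j.+1 Q s a <= Titer M j Q s a + (gamma M ^+ j * sigma)%:E.
  elim: j s a => [|j IH] s a ss.
    rewrite expr0 mul1r Titer_succ; apply: le_trans (backQ s a ss).
    exact: Tbar_le_backup.
  rewrite exprS -mulrA !Titer_succ; apply: Tbar_shift => //.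
  by rewrite mulr_ge0 ?exprn_ge0 ?gamma_ge0.
by apply: greedy_admissible => // s a ss; rewrite -Titer_succ; exact: T_decr.
Qed.

Lemma approximation_admissible (sigma delta : R) Q mu (Qhat : S -> A -> \bar R) :
  admissible M sigma Q mu eta -> Qbounded M Qhat ->
  ereal_sup [set `|Qhat p.1 p.2 - Q p.1 p.2| | p in [set p : S * A | safe M p.1]]
    <= delta%:E ->
  admissible M (sigma + (1 + gamma M) * delta) Qhat mu eta.
Proof.
move=> /admissibleE[_ hmu bQ backQ] bQh supd.
have dist s a : safe M s -> `|Qhat s a - Q s a| <= delta%:E.
  by move=> ss; apply: le_trans supd; apply: ereal_sup_ubound; exists (s, a).
have close s a (ss : safe M s) :=
  fin_dist_le (Qbounded_fin M bQh s a ss) (Qbounded_fin M bQ s a ss) (dist s a ss).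
apply/admissibleE; split=> // s a ss.
have delta0 : (0 <= delta)%R by rewrite -lee_fin (le_trans (abse_ge0 _) (dist s a ss)).
apply: le_trans (backup_shift hmu bQ delta0 (fun s a ss => (close s a ss).1) s a) _.
rewrite mulrDl mul1r addrCA !EFinD !addeA; apply: leeD => //.
by apply: le_trans (backQ s a ss) _; apply: leeD => //; exact: (close s a ss).2.
Qed.

End intervention_rules.

Theorem mainTheorem4 (R : realType) (S A : countType) (M : mdp R S A)
    (eta : R) (heta : (0 <= eta <= 1)%R) :
  (* (1) baseline policy *)
  (forall mu, is_policy mu ->
     admissible M 0 (Qpi M mu) mu eta /\
     (forall mup, is_policy mup -> greedy M (Qpi M mu) mup ->
        admissible M 0 (Qpi M mu) mup eta)) /\
  (* (2) composite intervention *)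
  (forall (K : nat) (Qk : 'I_K -> S -> A -> \bar R) (muk : 'I_K -> S -> A -> R)
          (sig : 'I_K -> R),
     (0 < K)%N -> (forall k, (0 <= sig k)%R) ->
     (forall k, admissible M (sig k) (Qk k) (muk k) eta) ->
     forall mumin, is_policy mumin -> greedy M (Qmin Qk) mumin ->
       admissible M (sigmax sig) (Qmin Qk) mumin eta) /\
  (* (3) value iteration *)
  (forall (sigma : R) Q mu, (0 <= sigma)%R -> admissible M sigma Q mu eta ->
     forall (k : nat) muk, is_policy muk -> greedy M (Titer M k Q) muk ->
       admissible M ((gamma M ^+ k) * sigma)%R (Titer M k Q) muk eta) /\
  (* (4) optimal intervention *)
  (forall pis, optimal M pis -> admissible M 0 (Qpi M pis) pis eta) /\
  (* (5) approximation *)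
  (forall (sigma delta : R) Q mu (Qhat : S -> A -> \bar R),
     (0 <= sigma)%R -> admissible M sigma Q mu eta ->
     (forall s a, safe M s -> 0 <= Qhat s a <= (gamma M)%:E) ->
     ereal_sup [set `|Qhat p.1 p.2 - Q p.1 p.2| | p in [set p : S * A | safe M p.1]]%classic
       <= delta%:E ->
     admissible M (sigma + (1 + gamma M) * delta)%R Qhat mu eta).
Proof.
split; [|split; [|split; [|split]]].
- move=> mu hmu; split; first exact (baseline_admissible M heta mu hmu).
  by move=> mup; exact (greedy_baseline_admissible M heta mu mup hmu).
- by move=> K Qk muk sig K0 _; exact: composite_admissible K0.
- by move=> sigma Q mu sigma0; exact: value_iteration_admissible heta sigma Q mu sigma0.
- by move=> pis [hpis _]; exact (baseline_admissible M heta pis hpis).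
- by move=> sigma delta Q mu Qhat _; exact: approximation_admissible.
Qed.
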